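(* Let $\lambda=0$ and let $y_1,y_2\in\mathbb{R}^k$. For $i\in\{1,2\}$ with $\mathbb{P}(r(y_1,y_2)=i)>0$ let $y_i^*\in\operatorname*{argmax}_{y\in\mathcal{Y}}\mathbb{E}[g(y)\mid r(y_1,y_2)=i]$ (and if $\mathbb{P}(r(y_1,y_2)=i)=0$ let $y_i^*\in\mathcal{Y}$ be arbitrary). Then $$\mathrm{EUBO}(y_1^*,y_2^* )\;\ge\;W_0(y_1,y_2).$$
   Context: Let $\mathcal{Y}\subseteq\mathbb{R}^k$ be compact. Let $g$ be a random function on $\mathbb{R}^k$ distributed as a Gaussian process with continuous mean and covariance; all probabilities and expectations are with respect to the law of $g$. For a query $(y_1,y_2)\in\mathbb{R}^k\times\mathbb{R}^k$ the noiseless ($\lambda=0$) response is $r(y_1,y_2)=1$ if $g(y_1)>g(y_2)$ and $r(y_1,y_2)=2$ if $g(y_1)<g(y_2)$ (ties broken arbitrarily). $\mathrm{EUBO}(y_1,y_2)=\mathbb{E}[\max\{g(y_1),g(y_2)\}]$, and $$W_0(y_1,y_2)=\sum_{i\in\{1,2\}:\,\mathbb{P}(r(y_1,y_2)=i)>0}\mathbb{P}(r(y_1,y_2)=i)\max_{y\in\mathcal{Y}}\mathbb{E}[g(y)\mid r(y_1,y_2)=i],$$ where these maxima are assumed attained. *)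

From HB Require Import structures.
From mathcomp Require Import all_boot all_order all_algebra.
From mathcomp Require Import all_classical all_reals all_analysis.
Set Implicit Arguments. Unset Strict Implicit. Unset Printing Implicit Defensive.
Import Order.TTheory GRing.Theory Num.Theory.
Import numFieldNormedType.Exports.
Local Open Scope classical_set_scope.
Local Open Scope ring_scope.

Section defs.
Context {R : realType} {d : measure_display} {T : measurableType d}.
Variable P : probability T R.

Definition Expect (X : T -> R) : R := fine (\int[P]_w (X w)%:E)%E.

Definition Econd (X : T -> R) (A : set T) : R :=
  fine (\int[P]_(w in A) (X w)%:E)%E / fine (P A).

Definition has_normal_law (X : T -> R) (m v : R) : Prop :=
  forall B : set R, measurable B ->
    P (X @^-1` B) = if v == 0 then \d_m B else normal_prob m (Num.sqrt v) B.

(** g is a Gaussian process on R^k with mean function mu and covariance K: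
    each g y is a random variable, and every finite linear combination
    sum_j c_j g(x_j) is normally distributed with mean sum_j c_j mu(x_j) and
    variance sum_{j,l} c_j c_l K(x_j, x_l). *)
Definition gaussian_process (k : nat) (g : 'rV[R]_k -> T -> R)
    (mu : 'rV[R]_k -> R) (K : 'rV[R]_k -> 'rV[R]_k -> R) : Prop :=
  (forall y, measurable_fun setT (g y)) /\
  (forall s : seq (R * 'rV[R]_k),
     0 <= \sum_(p <- s) \sum_(q <- s) p.1 * q.1 * K p.2 q.2) /\
  forall s : seq (R * 'rV[R]_k),
    has_normal_law (fun w => \sum_(p <- s) p.1 * g p.2 w)
      (\sum_(p <- s) p.1 * mu p.2)
      (\sum_(p <- s) \sum_(q <- s) p.1 * q.1 * K p.2 q.2).

(** noiseless response r(y1,y2) in {1,2}, ties broken arbitrarily (measurably) *)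
Definition noiseless_response (k : nat) (g : 'rV[R]_k -> T -> R)
    (y1 y2 : 'rV[R]_k) (r : T -> nat) : Prop :=
  (forall w, r w = 1%N \/ r w = 2%N) /\
  (forall w, g y2 w < g y1 w -> r w = 1%N) /\
  (forall w, g y1 w < g y2 w -> r w = 2%N) /\
  (forall i : nat, measurable [set w | r w = i]).

Definition EUBO (k : nat) (g : 'rV[R]_k -> T -> R) (y1 y2 : 'rV[R]_k) : R :=
  Expect (fun w => Num.max (g y1 w) (g y2 w)).

(** W_0(y1,y2) = sum_{i in {1,2}, P(r=i)>0} P(r=i) max_{y in Y} E[g(y) | r = i]
    (the maximum, assumed attained, is written as a supremum) *)
Definition W0 (k : nat) (Y : set 'rV[R]_k) (g : 'rV[R]_k -> T -> R)
    (r : T -> nat) : R :=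
  \sum_(i <- [:: 1%N; 2%N] | (0 < P [set w | r w = i])%E)
     fine (P [set w | r w = i]) *
     sup [set Econd (g y) [set w | r w = i] | y in Y].

End defs.

From HB Require Import structures.
From mathcomp Require Import all_boot all_order all_algebra.
From mathcomp Require Import all_classical all_reals all_analysis.
From mathcomp Require Import measurable_realfun.
From mathcomp Require Import ring lra.
Set Implicit Arguments. Unset Strict Implicit. Unset Printing Implicit Defensive.
Import Order.TTheory GRing.Theory Num.Theory.
Import numFieldNormedType.Exports.
Local Open Scope classical_set_scope.
Local Open Scope ring_scope.

(* On the event {r = i} of positive probability the maximiser y*_i attains the
   supremum in W_0, so the i-th summand of W_0 is E[g(y*_i) 1_{r = i}], which is
   at most E[max(g(y*_1), g(y*_2)) 1_{r = i}]; events of probability zero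
   contribute 0 to both sides. Summing over the partition {r = 1} + {r = 2} gives
   EUBO(y*_1, y*_2). All expectations are finite because each g(y) is Gaussian
   and Gaussian laws have a finite first absolute moment. Compactness of Y and
   continuity of mu and K only serve to make the maximisers exist; here they are
   given. *)

Section normal_first_moment.
Variable R : realType.
Implicit Types m s x : R.

(* With [t := (x - m)^2 / (4 s^2)]: [|x - m| <= |s| (1 + t) <= |s| e^t], and
   [e^t] times the N(m, s^2) Gaussian factor [e^(-2t)] is the factor of N(m, 2 s^2). *)
Lemma normal_fun_normr_le m s x : s != 0 ->
  `|x - m| * normal_fun m s x <= `|s| * normal_fun m (s * Num.sqrt 2) x.
Proof.
move=> s0; rewrite /normal_fun.
set u := (x - m) ^+ 2.
have s2_gt0 : 0 < s ^+ 2 by rewrite exprn_even_gt0.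
have -> : s ^+ 2 *+ 2 = 2 * s ^+ 2 by rewrite mulr_natl.
have -> : (s * Num.sqrt 2) ^+ 2 *+ 2 = 4 * s ^+ 2.
  by rewrite exprMn sqr_sqrtr ?ler0n // mulrnAr -mulr_natl; lra.
set t := u / (4 * s ^+ 2).
have -> : - u / (2 * s ^+ 2) = - t - t by rewrite /t; field; lra.
have -> : - u / (4 * s ^+ 2) = - t by rewrite /t mulNr.
rewrite expRD mulrA ler_pM2r ?expR_gt0 //.
have s_gt0 : 0 < `|s| by rewrite normr_gt0.
have lin_bound : `|x - m| <= `|s| * (1 + t).
  set q := `|x - m| / `|s|.
  have -> : t = q ^+ 2 / 4.
    rewrite /t /u /q expr_div_n -!normrX !ger0_norm ?sqr_ge0 //; field; lra.
  have -> : `|x - m| = `|s| * q by rewrite /q mulrCA divff ?mulr1 // gt_eqF.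
  rewrite ler_pM2l //; have := sqr_ge0 (q - 2); rewrite !expr2; nra.
rewrite -ler_pdivlMr ?expR_gt0 // expRN invrK.
by apply: (le_trans lin_bound); rewrite ler_pM2l // expR_ge1Dx.
Qed.

Lemma integrable_normr_normal_pdf m s : s != 0 ->
  (@lebesgue_measure R).-integrable setT (fun x => (`|x| * normal_pdf m s x)%:E).
Proof.
move=> s0.
have s'0 : s * Num.sqrt 2 != 0 by rewrite mulf_neq0 // sqrtr_eq0 -ltNge ltr0n.
set c := normal_peak s * `|s| / normal_peak (s * Num.sqrt 2).
have dom_int := integrableD measurableT
  (integrableZl measurableT c (integrable_normal_pdf m (s * Num.sqrt 2)))
  (integrableZl measurableT `|m| (integrable_normal_pdf m s)).
apply: (le_integrable measurableT _ _ dom_int).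
  apply/measurable_EFinP; apply: measurable_funM; last exact: measurable_normal_pdf.
  exact: normr_measurable.
move=> x _.
have pdf_ge0 := normal_pdf_ge0 m s x.
have peak_gt0 : 0 < normal_peak s := normal_peak_gt0 s0.
have peak'_gt0 : 0 < normal_peak (s * Num.sqrt 2) := normal_peak_gt0 s'0.
have c_ge0 : 0 <= c by rewrite /c divr_ge0 ?mulr_ge0 // ltW.
rewrite -!EFinM -EFinD !abse_EFin lee_fin.
rewrite ger0_norm ?mulr_ge0 // ger0_norm; last first.
  by apply: addr_ge0; apply: mulr_ge0; rewrite ?normal_pdf_ge0.
have x_le : `|x| <= `|x - m| + `|m| by rewrite -[X in `|X|](subrK m) ler_normD.
apply: (le_trans (ler_wpM2r pdf_ge0 x_le)); rewrite mulrDl lerD2r.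
rewrite /normal_pdf (negbTE s0) (negbTE s'0) /c.
have := @normal_fun_normr_le m s x s0.
rewrite mulrCA (mulrC (normal_peak s)) mulrA divfK ?gt_eqF //.
have := ltW peak_gt0; nra.
Qed.

(* Change of variables through the Radon-Nikodym derivative of [normal_prob m s],
   which is a.e. [normal_pdf m s]. *)
Lemma normal_prob_normr_lty m s : s != 0 ->
  (\int[normal_prob m s]_x (`|x|%:E) < +oo)%E.
Proof.
move=> s0.
have ac := @normal_prob_dominates R m s.
set RN := Radon_Nikodym_SigmaFinite.f (normal_prob m s) (@lebesgue_measure R).
have RN_int := Radon_Nikodym_SigmaFinite.f_integrable ac.
have mRN : measurable_fun setT RN by exact: measurable_int RN_int.
rewrite -(Radon_Nikodym_SigmaFinite.change_of_variables ac
  (f := fun x => `|x|%:E)) //; last exact: measurableT_comp.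
have RN_pdf : ae_eq (@lebesgue_measure R) setT RN
    (fun x => (normal_pdf m s x)%:E).
  apply: integral_ae_eq => //.
  - by apply: measurableT_comp => //; exact: measurable_normal_pdf.
  - by move=> E _ mE; rewrite -(Radon_Nikodym_SigmaFinite.f_integral ac mE).
rewrite (_ : \int[lebesgue_measure]_x (`|x|%:E * RN x) =
              \int[lebesgue_measure]_x (`|x| * normal_pdf m s x)%:E)%E;
  first exact: (integrable_lty measurableT (@integrable_normr_normal_pdf m s s0)).
apply: ae_eq_integral => //.
- by apply: emeasurable_funM => //; exact: measurableT_comp.
- apply/measurable_EFinP; apply: measurable_funM; last exact: measurable_normal_pdf.
  exact: normr_measurable.
- by apply: filterS RN_pdf => x /= eqRN /eqRN ->; rewrite EFinM.
Qed.
End normal_first_moment.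

Section gaussian_integrability.
Context {R : realType} {d : measure_display} {T : measurableType d}.
Variable P : probability T R.

Lemma normal_law_integrable (X : T -> R) (m v : R) :
  measurable_fun setT X -> 0 <= v -> has_normal_law P X m v ->
  P.-integrable setT (EFin \o X).
Proof.
move=> mX v_ge0 lawX.
apply/integrableP; split; first exact/measurable_EFinP.
pose XR : T -> measurableTypeR R := X.
have mXR : measurable_fun setT XR by [].
rewrite (_ : \int[P]_x `|(EFin \o X) x| = \int[pushforward P XR]_y `|y|%:E)%E;
  last by rewrite (ge0_integral_pushforward mXR) //; exact: measurableT_comp.
have [v0|v_neq0] := eqVneq v 0.
  rewrite (eq_measure_integral (@dirac _ (measurableTypeR R) m R)); last first.
    by move=> A mA _; transitivity (P (X @^-1` A)) => //; rewrite lawX // v0 eqxx.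
  by rewrite integral_dirac ?diracT ?mul1e ?ltry //; exact: measurableT_comp.
rewrite (eq_measure_integral (normal_prob m (Num.sqrt v))); last first.
  by move=> A mA _; transitivity (P (X @^-1` A)) => //; rewrite lawX // (negbTE v_neq0).
by apply: normal_prob_normr_lty; rewrite sqrtr_eq0 -ltNge lt_neqAle eq_sym v_neq0.
Qed.

Lemma gaussian_process_integrable (k : nat) (g : 'rV[R]_k -> T -> R) mu K y :
  gaussian_process P g mu K -> P.-integrable setT (EFin \o g y).
Proof.
move=> [mg [K_psd law]].
have := law [:: (1, y)]; have := K_psd [:: (1, y)].
under [X in has_normal_law _ X _ _ -> _]funext => w do rewrite big_seq1 mul1r.
exact: normal_law_integrable (mg y).
Qed.
End gaussian_integrability.

Lemma integrable_maxr {R : realType} {d : measure_display} {T : measurableType d}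
    (mu : measure T R) (D : set T) (f h : T -> R) : measurable D ->
  mu.-integrable D (EFin \o f) -> mu.-integrable D (EFin \o h) ->
  mu.-integrable D (EFin \o (f \max h)).
Proof.
move=> mD fint hint.
apply: (le_integrable mD _ _ (integrableD mD (integrable_abse fint) (integrable_abse hint))).
  apply/measurable_EFinP/measurable_maxr; apply/measurable_EFinP.
  - exact: measurable_int fint.
  - exact: measurable_int hint.
move=> w _ /=; rewrite lee_fin [X in _ <= X]ger0_norm ?addr_ge0 //.
by rewrite /Order.max; case: ifP => _; rewrite ?lerDl ?lerDr.
Qed.

Lemma sup_image_maximizer {I : Type} {R : realType} (Y : set I) (f : I -> R) x :
  x \in Y -> (forall y, y \in Y -> f y <= f x) -> sup (f @` Y) = f x.
Proof.
move=> xY x_max; have fx_in : (f @` Y) (f x) by exists x => //; rewrite -inE.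
have fx_ub : ubound (f @` Y) (f x) by move=> _ [y Yy <-]; apply: x_max; rewrite inE.
apply/le_anti/andP; split; first by apply: ge_sup => //; exists (f x).
by apply: sup_upper_bound => //; split; [exists (f x) | exists (f x)].
Qed.

Section conditional_bound.
Context {R : realType} {d : measure_display} {T : measurableType d}.
Variable P : probability T R.

Lemma mul_prob_Econd (X : T -> R) (A : set T) : measurable A -> (0 < P A)%E ->
  fine (P A) * Econd P X A = \int[P]_(w in A) X w.
Proof.
move=> mA PA_gt0; rewrite /Econd mulrC divfK // gt_eqF // fine_gt0 // PA_gt0 /=.
exact: le_lt_trans (probability_le1 P mA) (ltry 1).
Qed.

Definition W0_term (k : nat) (Y : set 'rV[R]_k) (g : 'rV[R]_k -> T -> R)
    (A : set T) : R :=
  if (0 < P A)%E then fine (P A) * sup [set Econd P (g y) A | y in Y] else 0.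

Lemma W0E (k : nat) (Y : set 'rV[R]_k) (g : 'rV[R]_k -> T -> R) (r : T -> nat) :
  W0 P Y g r = W0_term Y g [set w | r w = 1%N] + W0_term Y g [set w | r w = 2%N].
Proof.
by rewrite /W0 /W0_term !big_cons big_nil; do 2 case: ifP; rewrite ?addr0 ?add0r.
Qed.

Lemma W0_term_le_Rintegral (k : nat) (Y : set 'rV[R]_k) (g : 'rV[R]_k -> T -> R)
    (A : set T) (ys : 'rV[R]_k) (X : T -> R) :
  measurable A -> ys \in Y ->
  P.-integrable A (EFin \o g ys) -> P.-integrable A (EFin \o X) ->
  (forall w, A w -> g ys w <= X w) ->
  ((0 < P A)%E -> forall y, y \in Y -> Econd P (g y) A <= Econd P (g ys) A) ->
  W0_term Y g A <= \int[P]_(w in A) X w.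
Proof.
move=> mA ysY gint Xint gX ys_max; rewrite /W0_term.
case: ifPn => [PA_gt0|PA_le0].
  rewrite (sup_image_maximizer ysY (ys_max PA_gt0)) mul_prob_Econd //.
  exact: le_Rintegral.
have PA0 : P A = 0%E by apply/eqP; rewrite eq_le measure_ge0 andbT leNgt.
by rewrite /Rintegral null_set_integral //; exact: measurable_int Xint.
Qed.

Lemma noiseless_response_setT (k : nat) (g : 'rV[R]_k -> T -> R) y1 y2 r :
  noiseless_response g y1 y2 r -> [set: T] = [set w | r w = 1%N] `|` [set w | r w = 2%N].
Proof.
move=> [r12 _]; apply/seteqP; split=> // w _.
by case: (r12 w) => rw; [left | right].
Qed.
End conditional_bound.

Theorem mainTheorem6 (R : realType) (d : measure_display) (T : measurableType d)
  (P : probability T R) (k : nat) (Y : set 'rV[R]_k)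
  (g : 'rV[R]_k -> T -> R) (mu : 'rV[R]_k -> R) (K : 'rV[R]_k -> 'rV[R]_k -> R)
  (r : T -> nat) (y1 y2 ys1 ys2 : 'rV[R]_k) :
  compact Y ->
  gaussian_process P g mu K ->
  continuous mu ->
  continuous (fun p : 'rV[R]_k * 'rV[R]_k => K p.1 p.2) ->
  noiseless_response g y1 y2 r ->
  (* y_1^* *)
  ys1 \in Y ->
  ((0 < P [set w | r w = 1%N])%E ->
     forall y, y \in Y ->
       Econd P (g y) [set w | r w = 1%N] <= Econd P (g ys1) [set w | r w = 1%N]) ->
  (* y_2^* *)
  ys2 \in Y ->
  ((0 < P [set w | r w = 2%N])%E ->
     forall y, y \in Y ->
       Econd P (g y) [set w | r w = 2%N] <= Econd P (g ys2) [set w | r w = 2%N]) ->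
  EUBO P g ys1 ys2 >= W0 P Y g r.
Proof.
move=> _ gp _ _ resp ys1Y ys1_max ys2Y ys2_max.
have mr : forall i, measurable [set w | r w = i] by case: resp => _ [_ [_]].
have gint y : P.-integrable setT (EFin \o g y) := gaussian_process_integrable y gp.
set M := g ys1 \max g ys2.
have Mint := integrable_maxr measurableT (gint ys1) (gint ys2).
have intS i (f : T -> R) : P.-integrable setT (EFin \o f) ->
    P.-integrable [set w | r w = i] (EFin \o f).
  exact: integrableS measurableT (mr i) (@subsetT _ _).
rewrite W0E /EUBO (_ : Expect P _ = \int[P]_(w in setT) M w) //.
rewrite (noiseless_response_setT resp) Rintegral_setU //; first last.
- by apply/disj_setPS => w [/= ->].
- by rewrite -(noiseless_response_setT resp).
apply: lerD.
- apply: (W0_term_le_Rintegral (mr 1%N) ys1Y (intS _ _ (gint ys1)) (intS _ _ Mint))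
    ys1_max.
  by move=> w _; rewrite le_max lexx.
- apply: (W0_term_le_Rintegral (mr 2%N) ys2Y (intS _ _ (gint ys2)) (intS _ _ Mint))
    ys2_max.
  by move=> w _; rewrite le_max lexx orbT.
Qed.
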